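(* Let $A$ be a real $n\times n$ matrix, viewed as a linear operator on $H=\mathbb{R}^n$ with the Euclidean inner product $\langle\cdot,\cdot\rangle$ and norm $\|\cdot\|$, and let $\lambda$ be a real eigenvalue of $A$. Suppose there exists a sequence of triples $(\varepsilon_k,\eta_k,u_k)\in\mathbb{R}\times\mathbb{R}\times H$, $k\in\mathbb{N}$, such that for every $k$ $$(A-\lambda I)u_k=\varepsilon_k\big(|u_k|+\eta_k u_k\big),\qquad \varepsilon_k\neq 0,\qquad \|u_k\|=1,$$ and $(\varepsilon_k,\eta_k,u_k)\to(0,\eta_0,u_0)$ as $k\to\infty$ for some $\eta_0\in\mathbb{R}$, $u_0\in H$. Then necessarily $u_0\in\operatorname{Ker}(A-\lambda I)$, $u_0\neq 0$, and $$\langle |u_0|+\eta_0u_0,\,v\rangle=0\quad\text{for all } v\in\operatorname{Ker}(A^{*}-\lambda I),$$ i.e. the orthogonal projection of $|u_0|+\eta_0u_0$ onto $\operatorname{Ker}(A^*-\lambda I)$ is zero.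
   Context: $A^*$ denotes the transpose of $A$. For $u=[u_1,\dots,u_n]^t\in\mathbb{R}^n$, $|u|:=[|u_1|,\dots,|u_n|]^t$ (componentwise absolute value). The equation $(A-\lambda I)u=\varepsilon(|u|+\eta u)$ is the Fučík problem $Au=\alpha u^+-\beta u^-$ rewritten via $\alpha=\varepsilon(\eta+1)+\lambda$, $\beta=\varepsilon(\eta-1)+\lambda$, where $u^\pm$ are the componentwise positive and negative parts ($u_i^+=\max\{u_i,0\}$, $u_i^-=\max\{-u_i,0\}$). *)

From HB Require Import structures.
From mathcomp Require Import all_boot all_order all_algebra.
From mathcomp Require Import all_classical all_reals all_analysis.
Set Implicit Arguments. Unset Strict Implicit. Unset Printing Implicit Defensive.
Import Order.TTheory GRing.Theory Num.Theory.
Local Open Scope ring_scope.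

Definition dotv (R : realType) (n : nat) (u v : 'cV[R]_n) : R :=
  \sum_(i < n) u i 0 * v i 0.

Definition enorm (R : realType) (n : nat) (u : 'cV[R]_n) : R :=
  Num.sqrt (dotv u u).

Definition absv (R : realType) (n : nat) (u : 'cV[R]_n) : 'cV[R]_n :=
  \col_i `|u i 0|.

Definition is_real_eigenvalue (R : realType) (n : nat) (A : 'M[R]_n) (l : R) :=
  exists2 v : 'cV[R]_n, v != 0 & A *m v = l *: v.

From HB Require Import structures.
From mathcomp Require Import all_boot all_order all_algebra.
From mathcomp Require Import all_classical all_reals all_analysis.
Import Order.TTheory GRing.Theory Num.Theory numFieldNormedType.Exports.
Local Open Scope classical_set_scope.
Local Open Scope ring_scope.

(* Write w_k := |u_k| + eta_k u_k, so that (A - lambda) u_k = eps_k w_k.  For v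
   in Ker(A^T - lambda), eps_k <w_k, v> = <u_k, (A^T - lambda) v> = 0, and since
   eps_k <> 0 this gives <w_k, v> = 0 for every k.  Everything involved is
   continuous in finite dimension, so in the limit (A - lambda) u_0 = 0 (as
   eps_k w_k -> 0), <u_0, u_0> = 1 and <w_0, v> = 0. *)

Lemma cvg_mxP (U : puniformType) (T : Type) (F : set_system T) (FF : Filter F)
    m n (f : T -> 'M[U]_(m, n)) (a : 'M[U]_(m, n)) :
  f @ F --> a <-> forall i j, f x i j @[x --> F] --> a i j.
Proof.
rewrite cvg_mx_entourageP; split=> [fa i j | fa A entA].
  apply/cvg_entourageP => A /fa; apply: (@filterS _ F) => x /(_ i j).
  by rewrite inE.
apply: filter_forall => i; apply: filter_forall => j.
have /cvg_entourageP/(_ A entA) := fa i j.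
by apply: (@filterS _ F) => x /=; rewrite inE.
Qed.

Section EuclideanSpace.
Context {R : realType} {n : nat}.
Implicit Types (u v : 'cV[R]_n) (B : 'M[R]_n).

Lemma dotv0r u : dotv u 0 = 0.
Proof. by rewrite /dotv big1 // => i _; rewrite mxE mulr0. Qed.

Lemma dotvZl c u v : dotv (c *: u) v = c * dotv u v.
Proof. by rewrite /dotv mulr_sumr; apply: eq_bigr => i _; rewrite mxE mulrA. Qed.

Lemma dotv_mulmxl B u v : dotv (B *m u) v = dotv u (B^T *m v).
Proof.
rewrite /dotv; under eq_bigr => i _ do rewrite mxE big_distrl.
rewrite exchange_big; apply: eq_bigr => l _ /=.
rewrite mxE big_distrr; apply: eq_bigr => i _ /=.
by rewrite mxE mulrCA mulrA.
Qed.

Lemma sqr_enorm u : enorm u ^+ 2 = dotv u u.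
Proof. by rewrite sqr_sqrtr //; apply: sumr_ge0 => i _; rewrite -expr2 sqr_ge0. Qed.

Section Limits.
Context {T : Type} {F : set_system T} {FF : Filter F}.

Lemma cvg_absv {f : T -> 'cV[R]_n} {a} :
  f @ F --> a -> absv (f x) @[x --> F] --> absv a.
Proof.
move=> /cvg_mxP fa; apply/cvg_mxP => i j.
by rewrite mxE; under eq_cvg do rewrite mxE; exact: cvg_norm.
Qed.

Lemma cvg_mulmxl B {f : T -> 'cV[R]_n} {a} :
  f @ F --> a -> B *m f x @[x --> F] --> B *m a.
Proof.
move=> /cvg_mxP fa; apply/cvg_mxP => i j.
rewrite mxE; under eq_cvg do rewrite mxE.
apply: cvg_big => [|l _]; first exact: add_continuous.
exact: cvgMr.
Qed.

Lemma cvg_dotv {f g : T -> 'cV[R]_n} {a b} :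
  f @ F --> a -> g @ F --> b -> dotv (f x) (g x) @[x --> F] --> dotv a b.
Proof.
move=> /cvg_mxP fa /cvg_mxP gb.
apply: cvg_big => [|i _]; first exact: add_continuous.
exact: cvgM.
Qed.

End Limits.
End EuclideanSpace.

Theorem theorem1 (R : realType) (n : nat) (A : 'M[R]_n) (lambda : R)
  (eps eta : nat -> R) (u : nat -> 'cV[R]_n) (eta0 : R) (u0 : 'cV[R]_n) :
  is_real_eigenvalue A lambda ->
  (forall k, (A - lambda%:M) *m u k = eps k *: (absv (u k) + eta k *: u k)) ->
  (forall k, eps k != 0) ->
  (forall k, enorm (u k) = 1) ->
  eps k @[k --> \oo] --> (0 : R) ->
  eta k @[k --> \oo] --> eta0 ->
  u k @[k --> \oo] --> u0 ->
  [/\ (A - lambda%:M) *m u0 = 0,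
      u0 != 0 &
      forall v : 'cV[R]_n, (A^T - lambda%:M) *m v = 0 ->
        dotv (absv u0 + eta0 *: u0) v = 0].
Proof.
move=> _ eq_u eps_neq0 norm_u eps0 eta_cvg u_cvg.
set w0 := absv u0 + eta0 *: u0.
set w := fun k => absv (u k) + eta k *: u k.
have w_cvg : w k @[k --> \oo] --> w0.
  by apply: cvgD; [exact: cvg_absv | exact: cvgZ].
split.
- have : (A - lambda%:M) *m u k @[k --> \oo] --> (0 : 'cV[R]_n).
    by under eq_cvg do rewrite eq_u; rewrite -(scale0r w0); exact: cvgZ.
  exact: (cvg_unique (@norm_hausdorff _ _) (cvg_mulmxl _ u_cvg)).
- have : dotv (u k) (u k) @[k --> \oo] --> (1 : R).
    by under eq_cvg do rewrite -sqr_enorm norm_u expr1n; exact: cvg_cst.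
  move/(cvg_unique (@norm_hausdorff _ _) (cvg_dotv u_cvg u_cvg)).
  by apply: contra_eq_neq => ->; rewrite dotv0r eq_sym oner_neq0.
- move=> v kerv.
  have dotw_v k : dotv (w k) v = 0.
    apply: (mulfI (eps_neq0 k)).
    by rewrite mulr0 -dotvZl -eq_u dotv_mulmxl linearB /= tr_scalar_mx kerv dotv0r.
  have : dotv (w k) v @[k --> \oo] --> (0 : R).
    by under eq_cvg do rewrite dotw_v; exact: cvg_cst.
  exact: (cvg_unique (@norm_hausdorff _ _) (cvg_dotv w_cvg (cvg_cst v))).
Qed.
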